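(* For every integer $t\ge 14$, every graph $K_{3,t}^+$ belongs to $\mathcal{S}_3$.
   Context: Graphs may have parallel edges but no loops. For an integer $t\ge4$, $K_{3,t}^+$ denotes any $4$-edge-connected graph on $t+3$ vertices that contains the complete bipartite graph $K_{3,t}$ as a spanning subgraph. $G\in\mathcal{S}_3$ means: for every $\beta:V(G)\to\mathbb{Z}_3$ with $\sum_v\beta(v)\equiv0\pmod3$ there is a strongly-connected orientation $D$ of $G$ with $d^+_D(v)-d^-_D(v)\equiv\beta(v)\pmod3$ for all $v$. *)

From HB Require Import structures.
From mathcomp Require Import all_boot all_order all_algebra.
Set Implicit Arguments. Unset Strict Implicit. Unset Printing Implicit Defensive.
Import GRing.Theory.

(* A (multi)graph on vertex type V: a finite type E of edges, each edge e
   having two end-vertices src e, tgt e (the names are mere labels, the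
   graph is undirected).  Parallel edges are allowed (distinct edges may
   have the same ends); loops are excluded by the hypothesis
   [loopless src tgt]. *)
Definition loopless (V E : finType) (src tgt : E -> V) : Prop :=
  forall e, src e != tgt e.

Definition joins (V E : finType) (src tgt : E -> V) (e : E) (x y : V) : bool :=
  ((src e == x) && (tgt e == y)) || ((src e == y) && (tgt e == x)).

Definition connected_minus (V E : finType) (src tgt : E -> V) (F : {set E}) :
  Prop :=
  forall u v : V,
    connect (fun x y => [exists e, (e \notin F) && joins src tgt e x y]) u v.

Definition k_edge_connected (k : nat) (V E : finType) (src tgt : E -> V) : Prop :=
  forall F : {set E}, #|F| < k -> connected_minus src tgt F.

(* G contains K_{3,t} as a spanning subgraph, t = #|V| - 3: some 3-set A
   of vertices such that every vertex of A is joined by an edge to every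
   vertex outside A. *)
Definition contains_spanning_K3 (V E : finType) (src tgt : E -> V) : Prop :=
  exists A : {set V}, #|A| = 3 /\
    forall a b, a \in A -> b \notin A -> exists e, joins src tgt e a b.

Definition otail (V E : finType) (src tgt : E -> V) (D : E -> bool) (e : E) : V :=
  if D e then src e else tgt e.
Definition ohead (V E : finType) (src tgt : E -> V) (D : E -> bool) (e : E) : V :=
  if D e then tgt e else src e.

Definition outdeg (V E : finType) (src tgt : E -> V) (D : E -> bool) (v : V) : nat :=
  #|[set e | otail src tgt D e == v]|.
Definition indeg (V E : finType) (src tgt : E -> V) (D : E -> bool) (v : V) : nat :=
  #|[set e | ohead src tgt D e == v]|.

Definition strongly_connected (V E : finType) (src tgt : E -> V) (D : E -> bool)
  : Prop :=
  forall u v : V,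
    connect (fun x y => [exists e, (otail src tgt D e == x) &&
                                   (ohead src tgt D e == y)]) u v.

Definition in_S3 (V E : finType) (src tgt : E -> V) : Prop :=
  forall beta : V -> 'Z_3, (\sum_(v : V) beta v = 0)%R ->
    exists D : E -> bool, strongly_connected src tgt D /\
      forall v, ((outdeg src tgt D v)%:R - (indeg src tgt D v)%:R = beta v)%R.

(* Let A be the 3-side of the
   spanning K_{3,t} and B its complement, and fix one K_{3,t} edge k a b for
   every a in A, b in B.  Orientations are compared through their net outflow
   in 'Z_3.  Edges outside K_{3,t} keep an orientation Dm that minimises the
   number of "bad" vertices b in B, i.e. those already receiving exactly
   beta b from these edges.  Flipping single edges shows that a bad vertex
   has a "spare" edge (it exists by 4-edge-connectivity) towards a good
   vertex of B, and distinct bad vertices have distinct such neighbours; so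
   at least half of B, hence at least 7 vertices, are good.
   The three K-edges at a bad vertex all point the same way, against its
   spare edge; at a good vertex they realise the missing excess +-1 by
   choosing a "centre" in A.  The centres of three good vertices are chosen
   to connect A strongly through a hub (hub_choice), those of four more to
   fix the flows at two vertices of A (balance_choice); the flow at the last
   vertex of A is then forced by sum beta = 0.  Every vertex reaches the hub
   and is reached from it, so the orientation is strongly connected. *)

From Pilot Require Import Defs.
From HB Require Import structures.
From mathcomp Require Import all_boot all_order all_algebra.
From mathcomp Require Import zify ring.
Set Implicit Arguments. Unset Strict Implicit. Unset Printing Implicit Defensive.
Import GRing.Theory.

Section Z3Gadgets.
Local Open Scope ring_scope.

Lemma Z3_cases (x : 'Z_3) : [\/ x = 0, x = 1 | x = 2].
Proof.
case: x => [[|[|[|n]]] lt_x3] //; [apply: Or31 | apply: Or32 | apply: Or33];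
  exact: val_inj.
Qed.

Lemma I3_cases (i : 'I_3) : [\/ i = 0, i = 1 | i = 2].
Proof. exact: Z3_cases. Qed.

Lemma Z3_unit (x : 'Z_3) : x != 0 -> x = 1 \/ x = -1.
Proof.
by case: (Z3_cases x) => -> // _; [left | right; apply/eqP; vm_compute].
Qed.

(* Reversing an edge changes a net outflow c by -2c = c. *)
Lemma Z3_opp (x : 'Z_3) : - x = x + x.
Proof. by case: (Z3_cases x) => ->; apply/eqP; vm_compute. Qed.

Lemma Z3_mul3 (x : 'Z_3) : x *+ 3 = 0.
Proof. by case: (Z3_cases x) => ->; apply/eqP; vm_compute. Qed.

Lemma Z3_m1_eq1 : (-1 : 'Z_3) == 1 = false.
Proof. by vm_compute. Qed.

(* A vertex b outside A = {0, 1, 2} needing excess g = +-1 from its three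
   edges to A, with centre w: if g = 1 the edge to i leaves b iff i != w,
   if g = -1 iff i == w.  The net outflow of that edge at i is then
   g * sgn i w, and b gives a directed path i -> b -> h iff routes g w i h. *)
Definition sgn (i w : 'I_3) : 'Z_3 := if i == w then -1 else 1.
Definition leaves (g : 'Z_3) (w i : 'I_3) : bool :=
  if g == 1 then i != w else i == w.
Definition routes (g : 'Z_3) (w i h : 'I_3) : bool :=
  ~~ leaves g w i && leaves g w h.

(* excess 1: an out-star from the centre; excess -1: an in-star into it *)
Lemma routes_out w x : x != w -> routes 1 w w x.
Proof. by rewrite /routes /leaves !eqxx => ->. Qed.

Lemma routes_in w x : x != w -> routes (-1) w x w.
Proof. by rewrite /routes /leaves Z3_m1_eq1 eqxx andbT => /negbTE ->. Qed.

(* Three vertices with nonzero excesses can be given centres making A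
   strongly connected through a hub h: stars at 0, 1, 2 if all excesses
   agree, an out-star and an in-star at 0 otherwise. *)
Lemma hub_choice (g : 'I_3 -> 'Z_3) : (forall j, g j != 0) ->
  exists (w : 'I_3 -> 'I_3) (h : 'I_3), forall i, i != h ->
    (exists j, routes (g j) (w j) i h) /\ (exists j, routes (g j) (w j) h i).
Proof.
move=> gnz; have g_pm j := Z3_unit (gnz j).
case: (boolP [forall j, g j == g 0]) => [/forallP same | /forallPn [p gp]].
  exists id, 0 => i i0; have gj j : g j = g 0 by apply/eqP.
  case: (g_pm 0) => g0; split.
  - by exists i; rewrite gj g0 routes_out // eq_sym.
  - by exists 0; rewrite g0 routes_out.
  - by exists 0; rewrite g0 routes_in.
  - by exists i; rewrite gj g0 routes_in // eq_sym.
have [q [m [gq gm]]] : exists q m, g q = 1 /\ g m = -1.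
  case: (g_pm p) (g_pm 0) gp => gp1 [] g01; rewrite gp1 g01 ?eqxx // => _.
  - by exists p, 0.
  - by exists 0, p.
exists (fun=> 0), 0 => i i0.
by split; [exists m; rewrite gm routes_in | exists q; rewrite gq routes_out].
Qed.

Ltac search_centres :=
  lazymatch goal with |- _ =>
    once (do 4 (exists 0 + exists 1 + exists 2);
          split; apply/eqP; vm_compute; reflexivity)
  end.

Lemma balance4 (g0 g1 g2 g3 t0 t1 : 'Z_3) :
  g0 != 0 -> g1 != 0 -> g2 != 0 -> g3 != 0 ->
  exists w0 w1 w2 w3 : 'I_3,
   g0 * sgn 0 w0 + g1 * sgn 0 w1 + g2 * sgn 0 w2 + g3 * sgn 0 w3 = t0 /\
   g0 * sgn 1 w0 + g1 * sgn 1 w1 + g2 * sgn 1 w2 + g3 * sgn 1 w3 = t1.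
Proof.
case: (Z3_cases g0) => -> //; case: (Z3_cases g1) => -> //.
all: case: (Z3_cases g2) => -> //; case: (Z3_cases g3) => -> // _ _ _ _.
all: case: (Z3_cases t0) => ->; case: (Z3_cases t1) => ->.
all: search_centres.
Qed.

Lemma balance_choice (g : 'I_4 -> 'Z_3) (t : 'I_3 -> 'Z_3) :
  (forall j, g j != 0) ->
  exists w : 'I_4 -> 'I_3, forall i, i != 2 -> \sum_j g j * sgn i (w j) = t i.
Proof.
move=> gnz.
have [w0 [w1 [w2 [w3 [e0 e1]]]]] := balance4 (t 0) (t 1) (gnz ord0)
  (gnz (lift ord0 ord0)) (gnz (lift ord0 (lift ord0 ord0)))
  (gnz (lift ord0 (lift ord0 (lift ord0 ord0)))).
exists (fun j => tnth [tuple w0; w1; w2; w3] j) => i.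
rewrite !big_ord_recl big_ord0 addr0 !addrA.
by case: (I3_cases i) => ->.
Qed.

End Z3Gadgets.

Lemma inject_into (I T : finType) (S : {set T}) : #|I| <= #|S| ->
  exists f : I -> T, injective f /\ forall x, f x \in S.
Proof.
move=> le_IS; exists (fun x => enum_val (widen_ord le_IS (enum_rank x))); split.
  by move=> x y /enum_val_inj /(congr1 val) /= /val_inj /enum_rank_inj.
by move=> x; apply: enum_valP.
Qed.

Section OrientingK3t.
Variables (V E : finType) (src tgt : E -> V).
Hypothesis loop_free : loopless src tgt.
Local Notation tail := (otail src tgt).
Local Notation head := (Defs.ohead src tgt).

Definition incident (e : E) (v : V) : bool := (src e == v) || (tgt e == v).
Definition other_end (e : E) (v : V) : V := if src e == v then tgt e else src e.

Lemma tail_neq_head D e : tail D e != head D e.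
Proof.
rewrite /otail /Defs.ohead; case: (D e); first exact: loop_free.
by rewrite eq_sym; exact: loop_free.
Qed.

Lemma incident_tail_head D e v : incident e v = (tail D e == v) || (head D e == v).
Proof. by rewrite /incident /otail /Defs.ohead; case: (D e) => //; rewrite orbC. Qed.

Lemma head_of_incident D e v : incident e v -> tail D e != v -> head D e = v.
Proof. by rewrite (incident_tail_head D) => /orP[/eqP->|/eqP->]; rewrite ?eqxx. Qed.

Lemma incident_other_end e v : incident e v -> incident e (other_end e v).
Proof. by rewrite /incident /other_end; case: ifP => _; rewrite eqxx ?orbT. Qed.

Lemma other_end_neq e v : incident e v -> other_end e v != v.
Proof.
rewrite /incident /other_end; case: ifP => [/eqP <- _|].
  by rewrite eq_sym; exact: loop_free.
by move=> _ /= /eqP <-; exact: loop_free.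
Qed.

Lemma incident_cases e v x : incident e v -> incident e x -> x = v \/ x = other_end e v.
Proof.
rewrite /incident /other_end; case: (boolP (src e == v)) => [/eqP<-|_] /=.
  by move=> _ /orP[/eqP->|/eqP->]; [left|right].
by move=> /eqP<- /orP[/eqP->|/eqP->]; [right|left].
Qed.

Lemma joins_incident e x y : joins src tgt e x y -> incident e x && incident e y.
Proof.
by rewrite /joins /incident => /orP[/andP[/eqP-> /eqP->]|/andP[/eqP-> /eqP->]];
  rewrite !eqxx ?orbT.
Qed.

Lemma joins_incident_cases e x y v :
  joins src tgt e x y -> incident e v -> v = x \/ v = y.
Proof.
rewrite /joins /incident =>
  /orP[/andP[/eqP-> /eqP->]|/andP[/eqP-> /eqP->]] /orP[/eqP<-|/eqP<-];
  by [left|right].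
Qed.

Variables (A : {set V}) (k : V -> V -> E).
Hypothesis k_joins : forall a b, a \in A -> b \notin A -> joins src tgt (k a b) a b.
Variable beta : V -> 'Z_3.
Local Open Scope ring_scope.

Definition Kedges : {set E} := [set k p.1 p.2 | p in setX A (~: A)].

Definition arc_flow (D : E -> bool) e v : 'Z_3 :=
  (tail D e == v)%:R - (head D e == v)%:R.
Definition flow_off D v := \sum_(e | e \notin Kedges) arc_flow D e v.
Definition net_flow D v := \sum_e arc_flow D e v.

Definition bad D : {set V} := [set b in ~: A | beta b == flow_off D b].

Definition flip (D : {ffun E -> bool}) e0 : {ffun E -> bool} :=
  [ffun e => if e == e0 then ~~ D e else D e].

Lemma arc_flow_ext D D' e v : D e = D' e -> arc_flow D e v = arc_flow D' e v.
Proof. by rewrite /arc_flow /otail /Defs.ohead => ->. Qed.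

Lemma arc_flow_nincident D e v : ~~ incident e v -> arc_flow D e v = 0.
Proof.
rewrite /arc_flow (incident_tail_head D) negb_or => /andP[/negbTE-> /negbTE->].
by rewrite subrr.
Qed.

Lemma arc_flow_tail D e : arc_flow D e (tail D e) = 1.
Proof. by rewrite /arc_flow eqxx eq_sym (negbTE (tail_neq_head D e)) subr0. Qed.

Lemma arc_flow_head D e : arc_flow D e (head D e) = -1.
Proof. by rewrite /arc_flow eqxx (negbTE (tail_neq_head D e)) sub0r. Qed.

Lemma arc_flow_incident D e v : incident e v -> arc_flow D e v != 0.
Proof.
move=> ie; case: (eqVneq (tail D e) v) => [<-|ne].
  by rewrite arc_flow_tail oner_eq0.
by rewrite -(head_of_incident ie ne) arc_flow_head oppr_eq0 oner_eq0.
Qed.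

Lemma arc_flow_flip (D : {ffun E -> bool}) e0 v :
  arc_flow (flip D e0) e0 v = - arc_flow D e0 v.
Proof.
rewrite /arc_flow /otail /Defs.ohead /flip ffunE eqxx.
by case: (D e0) => /=; rewrite opprB.
Qed.

(* flipping an arc outside K adds its former outflow, as -2c = c in 'Z_3 *)
Lemma flow_off_flip (D : {ffun E -> bool}) e0 v : e0 \notin Kedges ->
  flow_off (flip D e0) v = flow_off D v + arc_flow D e0 v.
Proof.
move=> e0K; rewrite /flow_off (bigD1 e0) //= [in RHS](bigD1 e0) //= arc_flow_flip.
rewrite (eq_bigr (fun e => arc_flow D e v)); last first.
  by move=> e /andP[_ ne]; apply: arc_flow_ext; rewrite /flip ffunE (negbTE ne).
by rewrite Z3_opp addrAC addrA.
Qed.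

Lemma bad_flip_incident (D : {ffun E -> bool}) e0 v : e0 \notin Kedges ->
  incident e0 v -> v \in bad (flip D e0) -> v \notin bad D.
Proof.
move=> e0K ie; rewrite !inE flow_off_flip // => /andP[vB /eqP ->]; rewrite vB /=.
by rewrite -subr_eq0 addrC addKr arc_flow_incident.
Qed.

Lemma bad_flip_nincident (D : {ffun E -> bool}) e0 v : e0 \notin Kedges ->
  ~~ incident e0 v -> (v \in bad (flip D e0)) = (v \in bad D).
Proof. by move=> e0K ni; rewrite !inE flow_off_flip // arc_flow_nincident // addr0. Qed.

Lemma k_in_K a b : a \in A -> b \notin A -> k a b \in Kedges.
Proof. by move=> aA bB; apply/imsetP; exists (a, b) => //; rewrite inE aA inE bB. Qed.

Lemma Kedges_inv e : e \in Kedges -> exists a b, [/\ a \in A, b \notin A & e = k a b].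
Proof.
by case/imsetP => [[a b]]; rewrite inE /= inE => /andP[aA bB] ->; exists a, b.
Qed.

Lemma incident_k a b v : a \in A -> b \notin A -> incident (k a b) v -> v = a \/ v = b.
Proof. by move=> aA bB; apply: joins_incident_cases; apply: k_joins. Qed.

Lemma k_inj a b a' b' : a \in A -> b \notin A -> a' \in A -> b' \notin A ->
  k a b = k a' b' -> a = a' /\ b = b'.
Proof.
move=> aA bB aA' bB' eq_k.
have /andP[ia ib] := joins_incident (k_joins aA bB); rewrite eq_k in ia ib.
case: (incident_k aA' bB' ia) => ea; last by move: bB'; rewrite -ea aA.
case: (incident_k aA' bB' ib) => eb; first by move: bB; rewrite eb aA'.
by [].
Qed.

(* Since 4-edge-connected, the three K-edges at b do not disconnect b from A. *)
Lemma exists_spare_edge : #|A| = 3%N -> k_edge_connected 4 src tgt ->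
  forall b, b \notin A -> exists e, (e \notin Kedges) && incident e b.
Proof.
move=> cardA conn4 b bB.
have [a0 a0A] : exists a0, a0 \in A by apply/card_gt0P; rewrite cardA.
case: (pickP (fun e => (e \notin Kedges) && incident e b)) => [e He|none].
  by exists e.
pose F := [set e | incident e b].
have F_sub : F \subset [set k a b | a in A].
  apply/subsetP => e; rewrite inE => ie.
  have := none e; rewrite ie andbT => /negbFE /Kedges_inv [a [b' [aA bB' ee]]].
  have ie' : incident (k a b') b by rewrite -ee.
  case: (incident_k aA bB' ie') => eb; first by move: bB; rewrite eb aA.
  by apply/imsetP; exists a => //; rewrite ee eb.
have cardF : (#|F| < 4)%N.
  apply: (leq_ltn_trans (subset_leq_card F_sub)).
  by apply: (leq_ltn_trans (leq_imset_card _ _)); rewrite cardA.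
have /connectP [p Hp Hl] := conn4 F cardF b a0.
case: p Hp Hl => [_ /= ea0|x p /= /andP[/existsP [e /andP[eF je]] _] _].
  by move: bB; rewrite -ea0 a0A.
by move: eF; rewrite inE; have /andP[-> _] := joins_incident je.
Qed.

Lemma min_bad_orientation :
  exists Dm : {ffun E -> bool}, forall D : {ffun E -> bool}, (#|bad Dm| <= #|bad D|)%N.
Proof.
have [Dm _ Dmin] :=
  arg_minnP (fun D : {ffun E -> bool} => #|bad D|) (erefl : predT [ffun=> true]).
by exists Dm => D; apply: Dmin.
Qed.

Variable Dm : {ffun E -> bool}.
Hypothesis Dmin : forall D : {ffun E -> bool}, (#|bad Dm| <= #|bad D|)%N.

Lemma bad_notin_A b : b \in bad Dm -> b \notin A.
Proof. by rewrite !inE => /andP[]. Qed.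

(* Minimality: a non-K edge at a bad vertex b leads to a good vertex of B,
   otherwise flipping it would cure b without creating a new bad vertex. *)
Lemma bad_neighbour_good b e : b \in bad Dm -> e \notin Kedges -> incident e b ->
  (other_end e b \notin A) && (other_end e b \notin bad Dm).
Proof.
move=> bb eK ie; apply/negPn/negP => Hn.
suff : (#|bad (flip Dm e)| < #|bad Dm|)%N by rewrite ltnNge Dmin.
apply: (@leq_ltn_trans #|bad Dm :\ b|); last by rewrite [X in (_ < X)%N](cardsD1 b) bb.
apply/subset_leq_card/subsetP => v vb.
case: (boolP (incident e v)) => iv.
  have nb := bad_flip_incident eK iv vb.
  have vB : v \notin A by move: vb; rewrite !inE => /andP[].
  case: (incident_cases ie iv) => ev; first by move: nb; rewrite ev bb.
  by move: Hn; rewrite -ev vB nb.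
rewrite (bad_flip_nincident _ eK iv) in vb.
by rewrite in_setD1 vb andbT; apply: contraNneq iv => ->.
Qed.

(* Minimality: two bad vertices u, w cannot reach the same good vertex g by
   non-K edges, otherwise flipping both edges cures u and w and spoils at
   most g. *)
Lemma bad_neighbours_distinct g u w e1 e2 :
  g \notin bad Dm -> u \in bad Dm -> w \in bad Dm -> u != w ->
  e1 \notin Kedges -> e2 \notin Kedges -> incident e1 u -> incident e2 w ->
  other_end e1 u = g -> other_end e2 w = g -> False.
Proof.
move=> gb ub wb uw e1K e2K i1 i2 o1 o2.
have gu : g != u by apply: contraNneq gb => ->.
have gw : g != w by apply: contraNneq gb => ->.
have nw1 : ~~ incident e1 w.
  apply/negP => iw; case: (incident_cases i1 iw) => ew.
    by move: uw; rewrite ew eqxx.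
  by move: gw; rewrite -o1 -ew eqxx.
pose D2 := flip (flip Dm e1) e2.
suff : (#|bad D2| < #|bad Dm|)%N by rewrite ltnNge Dmin.
apply: (@leq_ltn_trans #|g |: (bad Dm :\ u :\ w)|).
  apply/subset_leq_card/subsetP => v vb.
  rewrite in_setU1 !in_setD1; case: (boolP (incident e2 v)) => iv.
    have nb := bad_flip_incident e2K iv vb.
    case: (incident_cases i2 iv) => ev; last by rewrite ev o2 eqxx.
    by move: nb; rewrite ev (bad_flip_nincident _ e1K nw1) wb.
  rewrite /D2 (bad_flip_nincident _ e2K iv) in vb.
  case: (boolP (incident e1 v)) => iv1.
    have nb := bad_flip_incident e1K iv1 vb.
    case: (incident_cases i1 iv1) => ev; last by rewrite ev o1 eqxx.
    by move: nb; rewrite ev ub.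
  rewrite (bad_flip_nincident _ e1K iv1) in vb.
  rewrite vb andbT; apply/orP; right; apply/andP; split.
    by apply: contraNneq iv => ->.
  by apply: contraNneq iv1 => ->.
rewrite cardsU1 [X in (_ < X)%N](cardsD1 u) ub (cardsD1 w (bad Dm :\ u)).
rewrite !in_setD1 wb (eq_sym w u) uw (negbTE gb) !andbF.
by rewrite addnA ltn_add2r.
Qed.

Hypothesis cardA : #|A| = 3%N.
Hypothesis conn4 : k_edge_connected 4 src tgt.

Definition spare_edge b : E :=
  if [pick e | (e \notin Kedges) && incident e b] is Some e then e else k b b.
Definition spare_neighbour b : V := other_end (spare_edge b) b.

Lemma spare_edgeP b : b \notin A ->
  (spare_edge b \notin Kedges) && incident (spare_edge b) b.
Proof.
move=> bB; rewrite /spare_edge; case: pickP => [e //|none].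
have [e He] := exists_spare_edge cardA conn4 bB.
by move: (none e); rewrite He.
Qed.

Definition good : {set V} := ~: A :\: bad Dm.

Lemma spare_neighbour_good b : b \in bad Dm -> spare_neighbour b \in good.
Proof.
move=> bb; have /andP[xK ix] := spare_edgeP (bad_notin_A bb).
have /andP[h1 h2] := bad_neighbour_good bb xK ix.
by rewrite /good in_setD h2 inE h1.
Qed.

Lemma card_bad_le_good : (#|bad Dm| <= #|good|)%N.
Proof.
have inj : {in bad Dm &, injective spare_neighbour}.
  move=> u w ub wb e; apply/eqP; case: (boolP (u == w)) => // uw; exfalso.
  have /andP[xKu ixu] := spare_edgeP (bad_notin_A ub).
  have /andP[xKw ixw] := spare_edgeP (bad_notin_A wb).
  have gb : spare_neighbour u \notin bad Dm.
    by have := spare_neighbour_good ub; rewrite /good in_setD => /andP[].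
  exact: (bad_neighbours_distinct gb ub wb uw xKu xKw ixu ixw erefl (esym e)).
rewrite -(card_in_imset inj); apply/subset_leq_card/subsetP => x.
by case/imsetP => b bb ->; apply: spare_neighbour_good.
Qed.

Lemma card_B_le_double_good : (#|~: A| <= #|good|.*2)%N.
Proof.
have B_bad : ~: A :&: bad Dm = bad Dm.
  by apply/setIidPr/subsetP => b bb; rewrite inE bad_notin_A.
by rewrite -(cardsID (bad Dm) (~: A)) B_bad -addnn leq_add2r card_bad_le_good.
Qed.

Definition apex (i : 'I_3) : V := enum_val (A := A) (cast_ord (esym cardA) i).

Lemma apex_in i : apex i \in A.
Proof. exact: enum_valP. Qed.

Lemma apex_inj : injective apex.
Proof. by move=> i j /enum_val_inj /(congr1 val) /= ij; apply: val_inj. Qed.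

Lemma apex_surj a : a \in A -> exists i, a = apex i.
Proof.
move=> aA; exists (cast_ord cardA (enum_rank_in aA a)).
by rewrite /apex cast_ordK enum_rankK_in.
Qed.

Lemma sum_A_if (j : V) (x y : 'Z_3) : j \in A ->
  \sum_(a in A) (if a == j then x else y) = x + y *+ 2.
Proof.
move=> jA; rewrite (bigD1 j) //= eqxx.
rewrite (eq_bigr (fun _ => y)); last by move=> a /andP[_ /negbTE->].
rewrite sumr_const; congr (_ + _ *+ _).
have := cardsD1 j A; rewrite jA cardA => /eqP; rewrite eqSS => /eqP ->.
by apply: eq_card => a; rewrite !inE andbC.
Qed.

Definition excess b : 'Z_3 := beta b - flow_off Dm b.

Lemma excess_good b : b \in good -> excess b != 0.
Proof.
move=> /setDP [bB nb]; move: bB; rewrite inE => bB.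
by rewrite /excess subr_eq0; apply: contra nb => e; rewrite !inE bB.
Qed.

Lemma good_notin_A b : b \in good -> b \notin A.
Proof. by rewrite /good in_setD in_setC => /andP[]. Qed.

Lemma good_not_bad b : b \in good -> b \notin bad Dm.
Proof. by rewrite /good in_setD => /andP[]. Qed.

Definition leaves_at (c : 'I_3) b a : bool :=
  if b \in bad Dm then head Dm (spare_edge b) == b
  else if excess b == 1 then a != apex c else a == apex c.
Definition kflow c b a : 'Z_3 := if leaves_at c b a then 1 else -1.

Lemma leaves_at_good c b i : b \in good -> leaves_at c b (apex i) = leaves (excess b) c i.
Proof.
by move=> gb; rewrite /leaves_at /leaves (negbTE (good_not_bad gb)) (inj_eq apex_inj).
Qed.

Lemma kflow_good c b i : b \in good -> kflow c b (apex i) = excess b * sgn i c.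
Proof.
move=> gb; rewrite /kflow leaves_at_good // /leaves /sgn.
have [->|->] := Z3_unit (excess_good gb); rewrite ?Z3_m1_eq1 ?eqxx.
  by rewrite mul1r; case: (i == c).
by case: (i == c); rewrite ?mulrN1 ?opprK ?mulr1.
Qed.

Lemma sum_kflow_B c b : b \notin A ->
  \sum_(a in A) kflow c b a = if b \in bad Dm then 0 else excess b.
Proof.
move=> bB; rewrite /kflow /leaves_at; case: ifP => bb.
  by rewrite sumr_const cardA Z3_mul3.
have gb : b \in good by rewrite /good in_setD bb inE.
have cA := apex_in c.
have [->|->] := Z3_unit (excess_good gb); rewrite ?Z3_m1_eq1 ?eqxx.
  rewrite (eq_bigr (fun a => if a == apex c then -1 else 1)); last first.
    by move=> a _; case: (a == _).
  by rewrite sum_A_if //; apply/eqP; vm_compute.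
by rewrite sum_A_if //; apply/eqP; vm_compute.
Qed.

Lemma good_two_way c b : b \in good ->
  exists a a', [/\ a \in A, a' \in A, leaves_at c b a & ~~ leaves_at c b a'].
Proof.
move=> gb; pose o : 'I_3 := if c == 0 then 1 else 0.
have oc : apex o != apex c.
  rewrite (inj_eq apex_inj) /o; case: ifP => [/eqP -> //|/negbT].
  by rewrite eq_sym.
rewrite /leaves_at (negbTE (good_not_bad gb)); case: (excess b == 1).
  by exists (apex o), (apex c); rewrite !apex_in oc eqxx.
by exists (apex c), (apex o); rewrite !apex_in eqxx (negbTE oc).
Qed.

Lemma card_set_nat (P : pred E) : #|[set e | P e]| = (\sum_e (P e : nat))%N.
Proof.
rewrite -sum1_card big_mkcond /=; apply: eq_bigr => e _; rewrite inE.
by case: (P e).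
Qed.

Lemma degree_flow (D : E -> bool) v :
  ((outdeg src tgt D v)%:R - (indeg src tgt D v)%:R : 'Z_3) = net_flow D v.
Proof. by rewrite /net_flow /arc_flow sumrB /outdeg /indeg !card_set_nat !natr_sum. Qed.

Lemma sum_indicator (x : V) : \sum_v ((x == v)%:R : 'Z_3) = 1.
Proof.
rewrite (bigD1 x) //= eqxx big1 ?addr0 // => v /negbTE.
by rewrite eq_sym => ->.
Qed.

(* each arc leaves one vertex and enters one *)
Lemma net_flow_total (D : E -> bool) : \sum_v net_flow D v = 0.
Proof.
rewrite /net_flow exchange_big big1 // => e _.
by rewrite /arc_flow sumrB !sum_indicator subrr.
Qed.

(* Seven good vertices: three for the hub, four for balancing. *)
Variable chosen : 'I_3 + 'I_4 -> V.
Hypothesis chosen_inj : injective chosen.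
Hypothesis chosen_good : forall j, chosen j \in good.

Definition Chosen : {set V} := [set chosen j | j : 'I_3 + 'I_4].

Definition rest_flow i := \sum_(b in ~: A :\: Chosen) kflow 0 b (apex i).

Section FinalOrientation.
Variable W : 'I_3 + 'I_4 -> 'I_3.

Definition centre_of b : 'I_3 := if [pick j | chosen j == b] is Some j then W j else 0.
Definition out_of b a : bool := leaves_at (centre_of b) b a.

Definition B_end e : V := if src e \in A then tgt e else src e.
Definition A_end e : V := if src e \in A then src e else tgt e.

Definition Dnew e : bool :=
  if e \in Kedges then (src e == B_end e) == out_of (B_end e) (A_end e) else Dm e.

Lemma centre_of_chosen j : centre_of (chosen j) = W j.
Proof.
rewrite /centre_of; case: pickP => [j' /eqP/chosen_inj -> //|].
by move/(_ j); rewrite eqxx.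
Qed.

Lemma centre_of_other b : b \notin Chosen -> centre_of b = 0.
Proof.
move=> bC; rewrite /centre_of; case: pickP => // j /eqP ej.
by move: bC; rewrite -ej imset_f.
Qed.

Lemma Dnew_k a b : a \in A -> b \notin A ->
  tail Dnew (k a b) = (if out_of b a then b else a) /\
  head Dnew (k a b) = (if out_of b a then a else b).
Proof.
move=> aA bB; have ab : (a == b) = false by apply/negbTE; apply: contraNneq bB => <-.
rewrite /otail /Defs.ohead /Dnew k_in_K // /B_end /A_end.
move: (k_joins aA bB); rewrite /joins; case/orP => /andP[/eqP-> /eqP->].
  by rewrite aA ab; case: (out_of b a).
by rewrite (negbTE bB) eqxx; case: (out_of b a).
Qed.

Definition arc x y := [exists e, (tail Dnew e == x) && (head Dnew e == y)].

Lemma arc_k a b : a \in A -> b \notin A -> if out_of b a then arc b a else arc a b.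
Proof.
move=> aA bB; have [h1 h2] := Dnew_k aA bB.
by case: (out_of b a) h1 h2 => h1 h2; apply/existsP; exists (k a b); rewrite h1 h2 !eqxx.
Qed.

Lemma arc_off e : e \notin Kedges -> arc (tail Dm e) (head Dm e).
Proof.
move=> eK; apply/existsP; exists e.
by rewrite /otail /Defs.ohead /Dnew (negbTE eK) !eqxx.
Qed.

Lemma net_flow_split v : net_flow Dnew v =
  \sum_(a in A) \sum_(b in ~: A) arc_flow Dnew (k a b) v + flow_off Dm v.
Proof.
rewrite /net_flow (bigID (fun e => e \in Kedges)) /=; congr (_ + _); last first.
  by apply: eq_bigr => e eK; apply: arc_flow_ext; rewrite /Dnew (negbTE eK).
rewrite /Kedges big_imset /=; last first.
  move=> [a b] [a' b']; rewrite !in_setX /= => /andP[aA bB] /andP[aA' bB'] /=.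
  by move/(k_inj aA _ aA') => [| |-> ->] //; rewrite -in_setC.
rewrite (eq_bigl (fun p => (p.1 \in A) && (p.2 \in ~: A))); last first.
  by move=> [a b]; rewrite in_setX.
by rewrite -(pair_big (fun a => a \in A) (fun b => b \in ~: A)
  (fun a b => arc_flow Dnew (k a b) v)).
Qed.

Lemma net_flow_B b : b \notin A ->
  net_flow Dnew b = \sum_(a in A) kflow (centre_of b) b a + flow_off Dm b.
Proof.
move=> bB; rewrite net_flow_split; congr (_ + _); apply: eq_bigr => a aA.
rewrite (bigD1 b) ?inE //= big1 ?addr0; last first.
  move=> b' /andP[bB' nb]; apply: arc_flow_nincident; apply/negP => ib.
  have bB'' : b' \notin A by rewrite -in_setC.
  case: (incident_k aA bB'' ib) => eb; first by move: bB; rewrite eb aA.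
  by move: nb; rewrite eb eqxx.
have [h1 h2] := Dnew_k aA bB.
have ba : (b == a) = false by apply/negbTE; apply: contraNneq bB => ->.
rewrite /arc_flow h1 h2 /kflow -/(out_of b a).
by case: (out_of b a); rewrite ?eqxx ?ba 1?eq_sym ?ba /= ?subr0 ?sub0r.
Qed.

Lemma net_flow_A a : a \in A ->
  net_flow Dnew a = - \sum_(b in ~: A) kflow (centre_of b) b a + flow_off Dm a.
Proof.
move=> aA; rewrite net_flow_split; congr (_ + _).
rewrite (bigD1 a) //= [X in _ + X]big1 ?addr0; last first.
  move=> a' /andP[aA' na]; apply: big1 => b; rewrite inE => bB.
  apply: arc_flow_nincident; apply/negP => /(incident_k aA' bB) [ea|ea].
    by move: na; rewrite ea eqxx.
  by move: bB; rewrite -ea aA.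
rewrite -sumrN; apply: eq_bigr => b; rewrite inE => bB.
have [h1 h2] := Dnew_k aA bB.
have ab : (a == b) = false by apply/negbTE; apply: contraNneq bB => <-.
rewrite /arc_flow h1 h2 /kflow -/(out_of b a).
by case: (out_of b a); rewrite ?eqxx ?ab 1?eq_sym ?ab /= ?subr0 ?sub0r ?opprK.
Qed.

Lemma net_flow_B_ok b : b \notin A -> net_flow Dnew b = beta b.
Proof.
move=> bB; rewrite net_flow_B // sum_kflow_B //; case: ifP => bb.
  by move: bb; rewrite !inE bB /= => /eqP ->; rewrite add0r.
by rewrite /excess subrK.
Qed.

Lemma sum_kflow_A i : \sum_(b in ~: A) kflow (centre_of b) b (apex i) =
  \sum_j excess (chosen j) * sgn i (W j) + rest_flow i.
Proof.
rewrite (big_setID Chosen); congr (_ + _); last first.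
  by apply: eq_bigr => b /setDP [_ bC]; rewrite centre_of_other.
have -> : ~: A :&: Chosen = Chosen.
  apply/setIidPr/subsetP => b /imsetP [j _ ->].
  by rewrite inE good_notin_A.
rewrite big_imset /=; last by move=> x y _ _; apply: chosen_inj.
by apply: eq_bigr => j _; rewrite centre_of_chosen kflow_good.
Qed.

Variable h : 'I_3.
Hypothesis hub : forall i, i != h ->
  (exists j, routes (excess (chosen j)) (W j) i h) /\
  (exists j, routes (excess (chosen j)) (W j) h i).

Lemma arc_route j i1 i2 : routes (excess (chosen j)) (W j) i1 i2 ->
  connect arc (apex i1) (apex i2).
Proof.
have cj := chosen_good j.
rewrite /routes -!(leaves_at_good _ _ cj) -!centre_of_chosen -!/(out_of _ _).
move=> /andP[o1 o2].
have a1 := arc_k (apex_in i1) (good_notin_A cj); rewrite (negbTE o1) in a1.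
have a2 := arc_k (apex_in i2) (good_notin_A cj); rewrite o2 in a2.
exact: connect_trans (connect1 a1) (connect1 a2).
Qed.

Lemma hub_reach_A a : a \in A -> connect arc (apex h) a && connect arc a (apex h).
Proof.
move=> /apex_surj [i ->]; case: (eqVneq i h) => [->|ih]; first by rewrite connect0.
have [[j1 r1] [j2 r2]] := hub ih.
by rewrite (arc_route r2) (arc_route r1).
Qed.

Lemma hub_reach_good b : b \in good -> connect arc (apex h) b && connect arc b (apex h).
Proof.
move=> gb; have bB := good_notin_A gb.
have [a [a' [aA aA' o o']]] := good_two_way (centre_of b) gb.
have r1 := arc_k aA bB; rewrite /out_of o in r1.
have r2 := arc_k aA' bB; rewrite /out_of (negbTE o') in r2.
have /andP[_ h1] := hub_reach_A aA; have /andP[h2 _] := hub_reach_A aA'.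
by rewrite (connect_trans h2 (connect1 r2)) (connect_trans (connect1 r1) h1).
Qed.

(* a bad vertex: its K-edges go one way, its spare edge (to a good vertex)
   the other way *)
Lemma hub_reach v : connect arc (apex h) v && connect arc v (apex h).
Proof.
case: (boolP (v \in A)) => vA; first exact: hub_reach_A.
case: (boolP (v \in bad Dm)) => vb; last first.
  by apply: hub_reach_good; rewrite /good in_setD vb inE.
have /andP[xK ix] := spare_edgeP vA.
have /andP[rg1 rg2] := hub_reach_good (spare_neighbour_good vb).
have ng : spare_neighbour v != v := other_end_neq ix.
have ig : incident (spare_edge v) (spare_neighbour v) := incident_other_end ix.
have ak := arc_k (apex_in h) vA.
have ax := arc_off xK.
rewrite /out_of /leaves_at vb in ak.
case hv: (head Dm (spare_edge v) == v); rewrite hv in ak.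
  have tg : tail Dm (spare_edge v) = spare_neighbour v.
    apply/eqP; move: ig.
    by rewrite (incident_tail_head Dm) (eqP hv) (eq_sym v) (negbTE ng) orbF.
  rewrite (eqP hv) tg in ax.
  by rewrite (connect_trans rg1 (connect1 ax)) (connect1 ak).
have tv : tail Dm (spare_edge v) = v.
  by apply/eqP; move: ix; rewrite (incident_tail_head Dm) hv orbF.
have hg : head Dm (spare_edge v) = spare_neighbour v.
  by apply: head_of_incident => //; rewrite tv eq_sym.
rewrite tv hg in ax.
by rewrite (connect1 ak) (connect_trans (connect1 ax) rg2).
Qed.

Lemma Dnew_strongly_connected : strongly_connected src tgt Dnew.
Proof.
move=> u v; have /andP[_ h1] := hub_reach u; have /andP[h2 _] := hub_reach v.
exact: connect_trans h1 h2.
Qed.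

Hypothesis balanced : forall i, i != 2 ->
  \sum_j excess (chosen j) * sgn i (W j) =
    flow_off Dm (apex i) - beta (apex i) - rest_flow i.
Hypothesis sum_beta : \sum_v beta v = 0.

Lemma net_flow_off_apex2 v : v != apex 2 -> net_flow Dnew v = beta v.
Proof.
move=> v2; case: (boolP (v \in A)) => vA; last exact: net_flow_B_ok.
have [i ei] := apex_surj vA; rewrite ei in v2 *.
have i2 : i != 2 by apply: contraNneq v2 => ->.
by rewrite net_flow_A ?apex_in // sum_kflow_A balanced //; ring.
Qed.

(* the last apex is balanced because the total demand is 0 *)
Lemma Dnew_net_flow v : net_flow Dnew v = beta v.
Proof.
case: (eqVneq v (apex 2)) => [->|]; last exact: net_flow_off_apex2.
have : \sum_v (net_flow Dnew v - beta v) = 0.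
  by rewrite sumrB net_flow_total sum_beta subrr.
rewrite (bigD1 (apex 2)) //= big1 ?addr0; first by move/eqP; rewrite subr_eq0 => /eqP.
by move=> w /net_flow_off_apex2 ->; rewrite subrr.
Qed.

End FinalOrientation.

Lemma good_orientation_exists : \sum_v beta v = 0 ->
  exists D : E -> bool, strongly_connected src tgt D /\
    forall v, ((outdeg src tgt D v)%:R - (indeg src tgt D v)%:R : 'Z_3) = beta v.
Proof.
move=> sum_beta; pose g j := excess (chosen j).
have gnz j : g j != 0 := excess_good (chosen_good j).
have [wh [h hubP]] := hub_choice (fun i => gnz (inl i)).
pose target i := flow_off Dm (apex i) - beta (apex i) - rest_flow i
  - \sum_j g (inl j) * sgn i (wh j).
have [wb balP] := balance_choice target (fun j => gnz (inr j)).
pose W j := match j with inl i => wh i | inr j => wb j end.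
exists (Dnew W); split.
  apply: (Dnew_strongly_connected (h := h)) => i /hubP [[j r1] [j' r2]].
  by split; [exists (inl j) | exists (inl j')].
move=> v; rewrite degree_flow (Dnew_net_flow _ sum_beta) // => i i2.
by rewrite big_sumType /= balP // /target addrC subrK.
Qed.

End OrientingK3t.

Lemma edge_function (V E : finType) (src tgt : E -> V) (A : {set V}) (e0 : E) :
  (forall a b, a \in A -> b \notin A -> exists e, joins src tgt e a b) ->
  exists k : V -> V -> E,
    forall a b, a \in A -> b \notin A -> joins src tgt (k a b) a b.
Proof.
move=> K3; exists (fun a b => odflt e0 [pick e | joins src tgt e a b]).
move=> a b aA bB; case: pickP => //= none.
by have [e je] := K3 a b aA bB; move: (none e); rewrite je.
Qed.

Theorem mainTheorem13 (t : nat) (V E : finType) (src tgt : E -> V) :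
  14 <= t ->
  #|V| = t + 3 ->
  loopless src tgt ->
  k_edge_connected 4 src tgt ->
  contains_spanning_K3 src tgt ->
  in_S3 src tgt.
Proof.
move=> t14 cardV loop_free conn4 [A [cardA K3]] beta sum_beta.
have cardB : #|~: A| = t by move: (cardsC A); rewrite cardA cardV; lia.
have [a0 a0A] : exists a0, a0 \in A by apply/card_gt0P; rewrite cardA.
have [b0] : exists b0, b0 \in ~: A by apply/card_gt0P; rewrite cardB; lia.
rewrite inE => b0B; have [e0 _] := K3 a0 b0 a0A b0B.
have [k k_joins] := edge_function e0 K3.
have [Dm Dmin] := min_bad_orientation src tgt A k beta.
have [chosen [chosen_inj chosen_good]] :
    exists chosen : 'I_3 + 'I_4 -> V, injective chosen /\
      forall j, chosen j \in good src tgt A k beta Dm.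
  apply: inject_into; rewrite card_sum !card_ord.
  have := card_B_le_double_good loop_free k_joins Dmin cardA conn4.
  by rewrite cardB; lia.
apply: (good_orientation_exists loop_free k_joins Dmin cardA conn4 chosen_inj
  chosen_good sum_beta).
Qed.
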